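(* Let $k$ be a field of characteristic zero and $r,n\geq1$. The centers of $\mathcal{D}(\mathcal{A}(C_r\wr\mathfrak{S}_n))$ and of $\mathcal{D}(\mathcal{B}_n)$ are $k$.
   Context: $\mathcal{A}(C_r\wr\mathfrak{S}_n)$ denotes the arrangement in $k^n$ (coordinates $x_1,\ldots,x_n$) with defining polynomial $x_1\cdots x_n\prod_{1\le i<j\le n}(x_j^r-x_i^r)$; its module of tangent derivations is free with basis $\alpha_1(x_k)=x_k$, $\alpha_m(x_k)=x_k\prod_{i=1}^{m-1}(x_k^r-x_i^r)$ ($2\le m\le n$). $\mathcal{B}_n$ is the braid arrangement in $k^n$ with hyperplanes $x_i=x_j$, $1\le i<j\le n$. For an arrangement $\mathcal{A}$ with defining polynomial $Q$ in $S=k[x_1,\ldots,x_n]$, $\mathcal{D}(\mathcal{A})=\bigcap_{m\ge1}\{P\in\mathcal{D}(S):P\,Q^m\mathcal{D}(S)\subseteq Q^m\mathcal{D}(S)\}$, where $\mathcal{D}(S)$ is the algebra of differential operators on $S$; for these (free) arrangements it is the subalgebra of $\operatorname{End}_k(S)$ generated by the tangent derivations and multiplications by elements of $S$. *)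

From HB Require Import structures.
From mathcomp Require Import all_boot all_order all_algebra.
From mathcomp Require Import mpoly.
Set Implicit Arguments. Unset Strict Implicit. Unset Printing Implicit Defensive.
Import GRing.Theory.
Local Open Scope ring_scope.

Section Defs.
Variables (k : fieldType) (n : nat).
Local Notation S := {mpoly k[n]}.

Definition mulop (g : S) : S -> S := fun p => g * p.

Definition derop (f : 'I_n -> S) : S -> S :=
  fun p => \sum_(i < n) f i * mderiv i p.

(* theta is tangent to the arrangement with defining polynomial Q:
   theta(Q) \in Q S *)
Definition tangent (Q : S) (f : 'I_n -> S) : Prop :=
  exists h : S, derop f Q = Q * h.

Inductive gen_alg (G : (S -> S) -> Prop) : (S -> S) -> Prop :=
  | ga_gen P : G P -> gen_alg G P
  | ga_id : gen_alg G id
  | ga_scale (c : k) P : gen_alg G P -> gen_alg G (fun p => c *: P p)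
  | ga_add P1 P2 : gen_alg G P1 -> gen_alg G P2 -> gen_alg G (fun p => P1 p + P2 p)
  | ga_comp P1 P2 : gen_alg G P1 -> gen_alg G P2 -> gen_alg G (P1 \o P2).

(* D(A) for the (free) arrangement with defining polynomial Q: the subalgebra
   of End_k(S) generated by multiplications by elements of S and by the
   tangent derivations *)
Definition DA (Q : S) : (S -> S) -> Prop :=
  gen_alg (fun P => (exists g : S, P = mulop g) \/
                    (exists f, tangent Q f /\ P = derop f)).

Definition center_is_k (A : (S -> S) -> Prop) : Prop :=
  forall P : S -> S,
    (A P /\ (forall P', A P' -> P \o P' = P' \o P)) <->
    (exists c : k, P = (fun p => c *: p)).

(* defining polynomial of A(C_r wr S_n):
   x_1...x_n prod_{i<j} (x_j^r - x_i^r) *)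
Definition Q_wreath (r : nat) : S :=
  (\prod_(i < n) 'X_i) *
  \prod_(i < n) \prod_(j < n | (i < j)%N) ('X_j ^+ r - 'X_i ^+ r).

(* defining polynomial of the braid arrangement B_n: prod_{i<j} (x_i - x_j) *)
Definition Q_braid : S :=
  \prod_(i < n) \prod_(j < n | (i < j)%N) ('X_i - 'X_j).

End Defs.

From HB Require Import structures.
From mathcomp Require Import all_boot all_order all_algebra.
From mathcomp Require Import mpoly.
From Stdlib Require Import FunctionalExtensionality.
Set Implicit Arguments. Unset Strict Implicit. Unset Printing Implicit Defensive.
Import GRing.Theory.
Local Open Scope ring_scope.

(* A central operator P commutes with every multiplication, so P = mulop h
   with h = P 1; commuting with the tangent derivations Q d/dx_i then gives
   Q * dh/dx_i = 0, so h is constant in characteristic zero.  Both defining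
   polynomials are nonzero, and the argument only uses Q != 0. *)

Section MpolyFacts.
Variables (R : idomainType) (n : nat).
Local Notation S := {mpoly R[n]}.

Lemma mnm_exists_le1 (m : 'X_{1..n}) : m != 0%MM -> exists i, (U_(i) <= m)%MM.
Proof.
move=> m0; apply/existsP; apply: contraNT m0 => /existsPn no_le.
apply/eqP/mnmP => i; rewrite mnm0E.
apply/eqP; rewrite -leqn0 leqNgt; apply: contra (no_le i) => mi_gt0.
by apply/mnm_lepP => j; rewrite mnm1E; case: eqP => [<-|].
Qed.

Lemma mderiv_eq0_mpolyC : [pchar R] =i pred0 ->
  forall h : S, (forall i, mderiv i h = 0) -> h = (h@_0%MM)%:MP.
Proof.
move=> /pcharf0P charR0 h dh0; apply/mpolyP => m; rewrite mcoeffC.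
have [->|/mnm_exists_le1 [i le_im]] := eqVneq m 0%MM; first by rewrite mulr1.
rewrite mulr0; apply/eqP.
have := congr1 (mcoeff (m - U_(i))%MM) (dh0 i).
rewrite mcoeff_deriv submK // mcoeff0 -mulr_natr => /eqP.
by rewrite mulf_eq0 charR0 orbF.
Qed.

Lemma mpolyXnB_neq0 (i j : 'I_n) r : (0 < r)%N -> i != j ->
  ('X_i ^+ r - 'X_j ^+ r : S) != 0.
Proof.
move=> r_gt0 neq_ij; apply/eqP => /(congr1 (mcoeff (U_(i) *+ r)%MM)).
rewrite mcoeffB !mcoeffXn eqxx mcoeff0.
have /negbTE -> : (U_(j) *+ r)%MM != (U_(i) *+ r)%MM.
  apply: contra neq_ij => /eqP/mnmP/(_ i); rewrite !mulmnE !mnm1E eqxx.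
  by case: (j =P i) => [->|_] //; rewrite mul0n mul1n => r0; rewrite -r0 in r_gt0.
by rewrite /= subr0 => /eqP; rewrite oner_eq0.
Qed.

Lemma mpolyX_neq0 (i : 'I_n) : ('X_i : S) != 0.
Proof. by rewrite -msize_poly_eq0 msizeX mdeg1. Qed.

End MpolyFacts.

Section DifferentialOperators.
Variables (k : fieldType) (n : nat).
Local Notation S := {mpoly k[n]}.
Implicit Types (Q g : S) (P : S -> S).

Lemma mulop_scalable g : scalable (mulop g).
Proof. by move=> c p; rewrite /mulop scalerAr. Qed.

Lemma derop_scalable (f : 'I_n -> S) : scalable (derop f).
Proof.
move=> c p; rewrite /derop scaler_sumr; apply: eq_bigr => i _.
by rewrite mderivZ scalerAr.
Qed.

Lemma gen_alg_scalable (G : (S -> S) -> Prop) P :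
  (forall P', G P' -> scalable P') -> gen_alg G P -> scalable P.
Proof.
move=> scalG; elim=> {P} [P /scalG //|//|c P _ IH|P1 P2 _ IH1 _ IH2|P1 P2 _ IH1 _ IH2]
  a p /=.
- by rewrite IH !scalerA mulrC.
- by rewrite IH1 IH2 scalerDr.
- by rewrite IH2 IH1.
Qed.

Lemma DA_scalable Q P : DA Q P -> scalable P.
Proof.
apply: gen_alg_scalable => _ [[g ->]|[f [_ ->]]].
- exact: mulop_scalable.
- exact: derop_scalable.
Qed.

Lemma DA_mulop Q g : DA Q (mulop g).
Proof. by apply: ga_gen; left; exists g. Qed.

Definition scaled_mderiv Q (i : 'I_n) : 'I_n -> S :=
  fun j => if j == i then Q else 0.

Lemma derop_scaled_mderiv Q i p : derop (scaled_mderiv Q i) p = Q * mderiv i p.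
Proof.
rewrite /derop (bigD1 i) //= /scaled_mderiv eqxx big1 ?addr0 // => j /negbTE ->.
by rewrite mul0r.
Qed.

Lemma DA_scaled_mderiv Q i : DA Q (derop (scaled_mderiv Q i)).
Proof.
apply: ga_gen; right; exists (scaled_mderiv Q i); split=> //.
by exists (mderiv i Q); rewrite derop_scaled_mderiv.
Qed.

Lemma commute_mulop P :
  (forall g, P \o mulop g = mulop g \o P) -> forall g, P g = g * P 1.
Proof.
by move=> PC g; have /(congr1 (fun F => F 1)) := PC g; rewrite /= /mulop mulr1.
Qed.

Section Center.
Variables (Q : S) (P : S -> S).
Hypothesis central_P : forall P', DA Q P' -> P \o P' = P' \o P.

Lemma central_mulop g : P g = g * P 1.
Proof. by apply: commute_mulop => g'; apply: central_P; apply: DA_mulop. Qed.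

Lemma central_mderiv1 : Q != 0 -> forall i, mderiv i (P 1) = 0.
Proof.
move=> Q0 i; have := congr1 (fun F => F 1) (central_P (DA_scaled_mderiv Q i)).
rewrite /= !derop_scaled_mderiv mderivC central_mulop mulr0 mul0r.
by move/esym/eqP; rewrite mulf_eq0 (negbTE Q0) => /eqP.
Qed.

End Center.

Lemma center_DA : [pchar k] =i pred0 -> forall Q, Q != 0 -> center_is_k (DA Q).
Proof.
move=> char0 Q Q0 P; split=> [[_ central_P]|[c ->]].
- exists (P 1)@_0%MM; apply: functional_extensionality => p.
  rewrite (central_mulop central_P) mulrC.
  by rewrite {1}(mderiv_eq0_mpolyC char0 (central_mderiv1 central_P Q0)) mul_mpolyC.
- split=> [|P' /DA_scalable P'_scal]; first exact: ga_scale (ga_id _).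
  by apply: functional_extensionality => p /=; rewrite P'_scal.
Qed.

End DifferentialOperators.

Section DefiningPolynomials.
Variables (k : fieldType) (n : nat).

Lemma Q_wreath_neq0 r : (0 < r)%N -> Q_wreath k n r != 0.
Proof.
move=> r_gt0; rewrite mulf_neq0 //.
  by apply/prodf_neq0 => i _; apply: mpolyX_neq0.
apply/prodf_neq0 => i _; apply/prodf_neq0 => j lt_ij.
by rewrite mpolyXnB_neq0 // neq_ltn lt_ij orbT.
Qed.

Lemma Q_braid_neq0 : Q_braid k n != 0.
Proof.
apply/prodf_neq0 => i _; apply/prodf_neq0 => j lt_ij.
by have := @mpolyXnB_neq0 k n i j 1 isT; rewrite !expr1; apply; rewrite neq_ltn lt_ij.
Qed.

End DefiningPolynomials.

Theorem corollary3p5 (k : fieldType) (hk : [pchar k] =i pred0) (r n : nat)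
  (hr : (1 <= r)%N) (hn : (1 <= n)%N) :
  center_is_k (DA (Q_wreath k n r)) /\ center_is_k (DA (Q_braid k n)).
Proof.
by split; apply: (center_DA hk); [exact: Q_wreath_neq0 | exact: Q_braid_neq0].
Qed.
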